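(* Let $s$ be the number of targeted indices, and suppose each targeted index receives at most $\ell_M$ good insertions. Then the algorithm's total RB cost for good insertions into targeted indices is $O\big(\ell_M^2\sqrt{s\,\mathcal{B}}\big)$, where $\mathcal{B}$ is the adversary's total RB cost.
   Context: Model. A hash table has $t$ indices with chaining. The objects at an index form a list, new objects are appended at the tail, and $L_i$ denotes the current number of objects in the list at index $i$. Under the algorithm \textsc{Depth Charge}, inserting an object at index $i$ costs the inserter an RB (resource-burning) cost of $L_i+1$. Objects inserted by clients are good objects and are placed at uniformly random indices. Objects inserted by the adversary are bad objects and are placed at indices of its choosing. The algorithm's RB cost is the total cost paid by clients, and $\mathcal{B}$ is the total cost paid by the adversary. $\ell_M$ is the maximum, over indices, of the maximum number of good objects ever present in that index. A targeted index is an index containing at least one bad object and at least one good object. *)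

From Stdlib Require Import Reals List Arith Bool.
Import ListNotations.
Open Scope bool_scope.

(* An operation on the hash table.  [Ins g i]: insertion of an object at
   index i; g = true for a good (client) object, g = false for a bad
   (adversarial) object.  [Del g i]: removal of one good (g = true) or bad
   (g = false) object from index i (a no-op if there is none).  Only the
   numbers of good / bad objects at each index matter for the costs. *)
Inductive event : Type :=
| Ins (good : bool) (i : nat)
| Del (good : bool) (i : nat).

Definition ev_index (e : event) : nat :=
  match e with Ins _ i => i | Del _ i => i end.

(* state: index |-> (number of good objects, number of bad objects) *)
Definition state := nat -> nat * nat.

Definition empty_state : state := fun _ => (0, 0).

Definition upd (st : state) (i : nat) (p : nat * nat) : state :=
  fun j => if Nat.eqb j i then p else st j.

Definition step (st : state) (e : event) : state :=
  match e with
  | Ins true i  => upd st i (S (fst (st i)), snd (st i))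
  | Ins false i => upd st i (fst (st i), S (snd (st i)))
  | Del true i  => upd st i (pred (fst (st i)), snd (st i))
  | Del false i => upd st i (fst (st i), pred (snd (st i)))
  end.

Definition state_at (es : list event) (k : nat) : state :=
  fold_left step (firstn k es) empty_state.

Definition L (st : state) (i : nat) : nat := fst (st i) + snd (st i).

(* Depth Charge: inserting at index i costs L_i + 1 *)
Definition ins_cost (st : state) (i : nat) : nat := L st i + 1.

Definition ev_cost (es : list event) (g : bool) (P : nat -> bool) (k : nat)
  : nat :=
  match nth_error es k with
  | Some (Ins g' i) =>
      if Bool.eqb g g' && P i then ins_cost (state_at es k) i else 0
  | _ => 0
  end.

Definition total_cost (es : list event) (g : bool) (P : nat -> bool) : nat :=
  fold_right plus 0 (map (ev_cost es g P) (seq 0 (length es))).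

Definition adv_cost (es : list event) : nat :=
  total_cost es false (fun _ => true).

Definition targetedb (es : list event) (i : nat) : bool :=
  existsb (fun k => Nat.ltb 0 (fst (state_at es k i))
                    && Nat.ltb 0 (snd (state_at es k i)))
          (seq 0 (S (length es))).

Definition num_targeted (t : nat) (es : list event) : nat :=
  length (filter (targetedb es) (seq 0 t)).

Definition ellM (t : nat) (es : list event) : nat :=
  fold_right Nat.max 0
    (map (fun i => fold_right Nat.max 0
            (map (fun k => fst (state_at es k i)) (seq 0 (S (length es)))))
         (seq 0 t)).

Definition good_ins (es : list event) (i : nat) : nat :=
  length (filter (fun e => match e with
                           | Ins true j => Nat.eqb j i
                           | _ => false end) es).

Definition good_cost_targeted (es : list event) : nat :=
  total_cost es true (targetedb es).

From Stdlib Require Import Reals List Arith Lia Lra Psatz.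

(* Fix an index i and let B_i be the adversary's cost at i.
   When i holds b bad objects, the adversary has paid at least
   1 + 2 + ... + b = b(b+1)/2 for them, so b <= sqrt(2 B_i) at all times;
   the number of good objects at i never exceeds ell_M.  Hence every good
   insertion at i costs at most ell_M + 1 + sqrt(2 B_i), and a targeted index
   receives at most ell_M of them.  Summing over the s targeted indices,
     G <= ell_M (ell_M + 1) s + ell_M X,   X = sum_i sqrt(2 B_i),
   and Cauchy-Schwarz gives X^2 <= s * 2B.  Finally every targeted index has
   B_i >= 1, so s <= B, hence s <= sqrt(sB), and G <= 4 ell_M^2 sqrt(sB). *)

Fixpoint sum_below (f : nat -> nat) (n : nat) : nat :=
  match n with 0 => 0 | S n => sum_below f n + f n end.

Lemma sum_below_seq (f : nat -> nat) (n : nat) :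
  fold_right plus 0 (map f (seq 0 n)) = sum_below f n.
Proof.
  induction n as [|n IH]; [reflexivity|].
  change (list_sum (map f (seq 0 (S n))) = sum_below f n + f n).
  rewrite seq_S, map_app, list_sum_app; cbn. unfold list_sum in *. lia.
Qed.

Lemma sum_below_ext (f g : nat -> nat) (n : nat) :
  (forall k, k < n -> f k = g k) -> sum_below f n = sum_below g n.
Proof.
  induction n as [|n IH]; intros H; cbn; [reflexivity|].
  rewrite IH, H; auto.
Qed.

Lemma sum_below_le (f g : nat -> nat) (n : nat) :
  (forall k, k < n -> f k <= g k) -> sum_below f n <= sum_below g n.
Proof.
  induction n as [|n IH]; intros H; cbn; [lia|].
  pose proof (H n (Nat.lt_succ_diag_r n)).
  enough (sum_below f n <= sum_below g n) by lia.
  apply IH; auto.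
Qed.

Lemma sum_below_add (f g : nat -> nat) (n : nat) :
  sum_below (fun k => f k + g k) n = sum_below f n + sum_below g n.
Proof. induction n; cbn; lia. Qed.

Lemma sum_below_scale (c : nat) (f : nat -> nat) (n : nat) :
  sum_below (fun k => c * f k) n = c * sum_below f n.
Proof. induction n as [|n IH]; cbn; [lia|]. rewrite IH; lia. Qed.

Lemma sum_below_zero (n : nat) : sum_below (fun _ => 0) n = 0.
Proof. induction n; cbn; lia. Qed.

Lemma sum_below_prefix (f : nat -> nat) (k n : nat) :
  k <= n -> sum_below f k <= sum_below f n.
Proof. induction 1; cbn; lia. Qed.

Lemma sum_below_swap (F : nat -> nat -> nat) (n t : nat) :
  sum_below (fun k => sum_below (fun i => F i k) t) n
  = sum_below (fun i => sum_below (fun k => F i k) n) t.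
Proof.
  induction n as [|n IH]; cbn.
  - symmetry; apply sum_below_zero.
  - rewrite IH, <- sum_below_add. reflexivity.
Qed.

Lemma sum_below_single (j c t : nat) :
  j < t -> sum_below (fun i => if j =? i then c else 0) t = c.
Proof.
  induction t as [|t IH]; intros Hj; cbn; [lia|].
  destruct (Nat.eqb_spec j t) as [-> | Hne].
  - rewrite (sum_below_ext _ (fun _ => 0)), sum_below_zero; [lia|].
    intros k Hk. destruct (Nat.eqb_spec t k); [lia | reflexivity].
  - rewrite IH; lia.
Qed.

Lemma count_below (p : nat -> bool) (t : nat) :
  length (filter p (seq 0 t)) = sum_below (fun i => if p i then 1 else 0) t.
Proof.
  induction t as [|t IH]; [reflexivity|].
  rewrite seq_S, filter_app, length_app, IH; cbn.
  destruct (p t); cbn; lia.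
Qed.

Lemma count_positions {A : Type} (p : A -> bool) (l : list A) :
  length (filter p l)
  = sum_below (fun k => match nth_error l k with
                        | Some x => if p x then 1 else 0
                        | None => 0 end) (length l).
Proof.
  induction l as [|x l IH] using rev_ind; [reflexivity|].
  rewrite filter_app, !length_app, Nat.add_1_r; cbn.
  rewrite nth_error_app2, Nat.sub_diag by lia; cbn.
  rewrite IH. f_equal.
  - apply sum_below_ext. intros k Hk. rewrite nth_error_app1 by lia. reflexivity.
  - destruct (p x); reflexivity.
Qed.

Lemma two_mul_le_sq_add (x y : nat) : 2 * (x * y) <= x * x + y * y.
Proof.
  destruct (Nat.le_ge_cases x y) as [Hxy | Hyx].
  - destruct (Nat.le_exists_sub x y Hxy) as [d [-> _]]. nia.
  - destruct (Nat.le_exists_sub y x Hyx) as [d [-> _]]. nia.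
Qed.

Lemma cauchy_schwarz (f g : nat -> nat) (n : nat) :
  sum_below (fun i => f i * g i) n * sum_below (fun i => f i * g i) n
  <= sum_below (fun i => f i * f i) n * sum_below (fun i => g i * g i) n.
Proof.
  induction n as [|n IH]; cbn; [lia|].
  set (a := f n); set (b := g n).
  assert (Hcross : 2 * (sum_below (fun i => f i * g i) n * (a * b))
                   <= sum_below (fun i => f i * f i) n * (b * b)
                      + a * a * sum_below (fun i => g i * g i) n).
  { replace (2 * (sum_below (fun i => f i * g i) n * (a * b)))
      with (sum_below (fun i => 2 * (a * b) * (f i * g i)) n)
      by (rewrite sum_below_scale; lia).
    replace (sum_below (fun i => f i * f i) n * (b * b)
             + a * a * sum_below (fun i => g i * g i) n)
      with (sum_below (fun i => b * b * (f i * f i) + a * a * (g i * g i)) n)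
      by (rewrite sum_below_add, !sum_below_scale; lia).
    apply sum_below_le. intros i _.
    pose proof (two_mul_le_sq_add (b * f i) (a * g i)). nia. }
  nia.
Qed.

Definition event_cost (g : bool) (P : nat -> bool) (st : state) (e : event)
  : nat :=
  match e with
  | Ins g' i => if Bool.eqb g g' && P i then ins_cost st i else 0
  | Del _ _ => 0
  end.

Lemma ev_cost_event (es : list event) (g : bool) (P : nat -> bool)
  (k : nat) (e : event) :
  nth_error es k = Some e -> ev_cost es g P k = event_cost g P (state_at es k) e.
Proof. intros He. unfold ev_cost. rewrite He. destruct e; reflexivity. Qed.

Lemma state_at_S (es : list event) (k : nat) (e : event) :
  nth_error es k = Some e -> state_at es (S k) = step (state_at es k) e.
Proof.
  unfold state_at. generalize empty_state.
  revert k; induction es as [|x es IH]; intros [|k] st He; cbn in *;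
    try discriminate.
  - injection He as ->. reflexivity.
  - apply IH, He.
Qed.

Definition cost_at (es : list event) (g : bool) (i k : nat) : nat :=
  sum_below (ev_cost es g (fun j => j =? i)) k.

Definition adv_cost_at (es : list event) (i : nat) : nat :=
  cost_at es false i (length es).

(* The potential b(b+1), b the number of bad objects at index i, grows by at
   most twice the adversary's payment for each event: a bad insertion at i
   raises b by one and costs at least b + 1. *)
Lemma bad_potential_step (st : state) (e : event) (i : nat) :
  snd (step st e i) * (snd (step st e i) + 1)
  <= snd (st i) * (snd (st i) + 1)
     + 2 * event_cost false (fun j => j =? i) st e.
Proof.
  destruct e as [[|] j | [|] j]; cbn; unfold upd, ins_cost, L;
    destruct (Nat.eqb_spec i j) as [-> | Hij]; rewrite ?Nat.eqb_refl; cbn;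
    try (destruct (Nat.eqb_spec j i); [congruence | cbn]); nia.
Qed.

Lemma bad_potential (es : list event) (i k : nat) :
  k <= length es ->
  snd (state_at es k i) * (snd (state_at es k i) + 1) <= 2 * cost_at es false i k.
Proof.
  induction k as [|k IH]; intros Hk; [cbn; lia|].
  destruct (nth_error es k) as [e|] eqn:He;
    [| apply nth_error_None in He; lia].
  rewrite (state_at_S _ _ _ He). unfold cost_at; cbn.
  rewrite (ev_cost_event _ _ _ _ _ He).
  pose proof (bad_potential_step (state_at es k) e i).
  specialize (IH ltac:(lia)). unfold cost_at in IH. lia.
Qed.

Lemma bad_count_le (es : list event) (i k : nat) :
  k <= length es -> snd (state_at es k i) <= Nat.sqrt (2 * adv_cost_at es i).
Proof.
  intros Hk.
  pose proof (bad_potential es i k Hk).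
  pose proof (sum_below_prefix (ev_cost es false (fun j => j =? i)) k (length es) Hk).
  rewrite <- (Nat.sqrt_square (snd (state_at es k i))).
  apply Nat.sqrt_le_mono. unfold adv_cost_at, cost_at in *. nia.
Qed.

Lemma le_fold_max (x : nat) (l : list nat) : In x l -> x <= fold_right Nat.max 0 l.
Proof.
  induction l as [|y l IH]; cbn; intros H; [contradiction|].
  destruct H as [-> | H]; [lia|]. specialize (IH H). lia.
Qed.

Lemma good_count_le (t : nat) (es : list event) (i k : nat) :
  i < t -> k <= length es -> fst (state_at es k i) <= ellM t es.
Proof.
  intros Hi Hk. unfold ellM.
  eapply Nat.le_trans;
    [| apply le_fold_max, in_map_iff;
       exists i; split; [reflexivity | apply in_seq; lia]].
  apply le_fold_max, in_map_iff.
  exists k. split; [reflexivity | apply in_seq; lia].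
Qed.

(* Every good insertion at index i costs at most ell_M + 1 + sqrt(2 B_i), so
   the clients' total cost at i is at most that times the number of good
   insertions at i. *)
Lemma good_cost_at_le (t : nat) (es : list event) (i : nat) :
  i < t ->
  cost_at es true i (length es)
  <= (ellM t es + 1 + Nat.sqrt (2 * adv_cost_at es i)) * good_ins es i.
Proof.
  intros Hi. unfold good_ins. rewrite count_positions, <- sum_below_scale.
  apply sum_below_le. intros k Hk.
  destruct (nth_error es k) as [e|] eqn:He; [| apply nth_error_None in He; lia].
  rewrite (ev_cost_event _ _ _ _ _ He).
  pose proof (good_count_le t es i k Hi ltac:(lia)).
  pose proof (bad_count_le es i k ltac:(lia)).
  set (r := Nat.sqrt (2 * adv_cost_at es i)) in *; clearbody r.
  destruct e as [[|] j | [|] j]; cbn; try lia.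
  destruct (Nat.eqb_spec j i) as [-> |]; cbn; [| lia].
  unfold ins_cost, L. lia.
Qed.

Lemma ev_cost_by_index (es : list event) (g : bool) (P : nat -> bool)
  (t k : nat) :
  (forall e, In e es -> ev_index e < t) ->
  ev_cost es g P k
  = sum_below (fun i => if P i then ev_cost es g (fun j => j =? i) k else 0) t.
Proof.
  intros Ht.
  destruct (nth_error es k) as [e|] eqn:He.
  - assert (Hin : ev_index e < t) by (apply Ht; eapply nth_error_In; eauto).
    rewrite (ev_cost_event _ _ _ _ _ He).
    rewrite (sum_below_ext _ (fun i => if ev_index e =? i
                                       then event_cost g P (state_at es k) e
                                       else 0)).
    + symmetry; apply sum_below_single, Hin.
    + intros i _. rewrite (ev_cost_event _ _ _ _ _ He).
      destruct e as [g' j | g' j]; cbn;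
        destruct (Nat.eqb_spec j i) as [-> | Hji]; rewrite ?Nat.eqb_refl;
        destruct (P _), (Bool.eqb g g'); cbn; try reflexivity.
      all: destruct (Nat.eqb_spec j i); congruence.
  - unfold ev_cost. rewrite He.
    rewrite (sum_below_ext _ (fun _ => 0)), sum_below_zero; [reflexivity|].
    intros i _. destruct (P i); reflexivity.
Qed.

Lemma total_cost_by_index (es : list event) (g : bool) (P : nat -> bool)
  (t : nat) :
  (forall e, In e es -> ev_index e < t) ->
  total_cost es g P
  = sum_below (fun i => if P i then cost_at es g i (length es) else 0) t.
Proof.
  intros Ht. unfold total_cost. rewrite sum_below_seq.
  rewrite (sum_below_ext _ _ _ (fun k _ => ev_cost_by_index es g P t k Ht)).
  rewrite sum_below_swap. apply sum_below_ext. intros i _.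
  unfold cost_at. destruct (P i); [reflexivity | apply sum_below_zero].
Qed.

(* a targeted index has received at least one bad insertion: B_i >= 1 *)
Lemma targeted_adv_cost_pos (es : list event) (i : nat) :
  targetedb es i = true -> 1 <= adv_cost_at es i.
Proof.
  unfold targetedb. intros H.
  apply existsb_exists in H as [k [Hk H]].
  apply in_seq in Hk. apply Bool.andb_true_iff in H as [_ Hbad].
  apply Nat.ltb_lt in Hbad.
  pose proof (bad_potential es i k ltac:(lia)).
  pose proof (sum_below_prefix (ev_cost es false (fun j => j =? i)) k (length es)
                ltac:(lia)).
  unfold adv_cost_at, cost_at in *. nia.
Qed.

Definition targeted_ind (es : list event) (i : nat) : nat :=
  if targetedb es i then 1 else 0.

Definition sqrt_adv_sum (t : nat) (es : list event) : nat :=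
  sum_below (fun i => Nat.sqrt (2 * adv_cost_at es i) * targeted_ind es i) t.

Section Aggregate.

Variables (t : nat) (es : list event).
Hypothesis in_range : forall e, In e es -> ev_index e < t.

Lemma adv_cost_by_index : adv_cost es = sum_below (adv_cost_at es) t.
Proof. apply (total_cost_by_index es false (fun _ => true) t in_range). Qed.

Lemma num_targeted_sum : num_targeted t es = sum_below (targeted_ind es) t.
Proof. apply count_below. Qed.

Lemma good_cost_targeted_le :
  (forall i, i < t -> targetedb es i = true -> good_ins es i <= ellM t es) ->
  good_cost_targeted es
  <= ellM t es * (ellM t es + 1) * num_targeted t es
     + ellM t es * sqrt_adv_sum t es.
Proof.
  intros Hgood.
  unfold good_cost_targeted, sqrt_adv_sum.
  rewrite (total_cost_by_index _ _ _ t in_range), num_targeted_sum.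
  rewrite <- !sum_below_scale, <- sum_below_add.
  apply sum_below_le. intros i Hi. unfold targeted_ind.
  destruct (targetedb es i) eqn:Htarg; [| lia].
  pose proof (good_cost_at_le t es i Hi).
  pose proof (Hgood i Hi Htarg). nia.
Qed.

Lemma sqrt_adv_sum_sq :
  sqrt_adv_sum t es * sqrt_adv_sum t es <= num_targeted t es * (2 * adv_cost es).
Proof.
  unfold sqrt_adv_sum.
  eapply Nat.le_trans; [apply cauchy_schwarz|].
  rewrite num_targeted_sum, adv_cost_by_index, <- (sum_below_scale 2).
  rewrite (Nat.mul_comm (sum_below (targeted_ind es) t)).
  apply Nat.mul_le_mono.
  - apply sum_below_le. intros i _. apply Nat.sqrt_spec; lia.
  - apply sum_below_le. intros i _. unfold targeted_ind.
    destruct (targetedb es i); lia.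
Qed.

(* each targeted index carries adversarial cost at least one: s <= B *)
Lemma num_targeted_le_adv_cost : num_targeted t es <= adv_cost es.
Proof.
  rewrite num_targeted_sum, adv_cost_by_index.
  apply sum_below_le. intros i _. unfold targeted_ind.
  destruct (targetedb es i) eqn:Htarg; [| lia].
  apply targeted_adv_cost_pos, Htarg.
Qed.

End Aggregate.

Open Scope R_scope.

(* The three counting inequalities give G <= 4 ell^2 sqrt(s B): with
   r = sqrt(s B) one has s <= r and X <= 2r. *)
Lemma cost_bound_real (G ell s B X : nat) :
  (G <= ell * (ell + 1) * s + ell * X)%nat ->
  (X * X <= s * (2 * B))%nat ->
  (s <= B)%nat ->
  INR G <= 4 * INR ell ^ 2 * sqrt (INR s * INR B).
Proof.
  intros HG HX Hs.
  apply le_INR in HG, HX, Hs.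
  rewrite plus_INR, !mult_INR, plus_INR in HG. rewrite !mult_INR in HX. cbn in HG, HX.
  pose proof (pos_INR s). pose proof (pos_INR B). pose proof (pos_INR X).
  pose proof (pos_INR ell).
  set (r := sqrt (INR s * INR B)).
  assert (Hr0 : 0 <= r) by apply sqrt_pos.
  assert (Hr2 : r * r = INR s * INR B) by (apply sqrt_sqrt; nra).
  assert (Hsr : INR s <= r) by nra.
  assert (HXr : INR X <= 2 * r) by nra.
  destruct (Nat.eq_dec ell 0) as [-> | Hell].
  - cbn in HG |- *. pose proof (pos_INR G). lra.
  - assert (Hell1 : 1 <= INR ell) by (apply (le_INR 1); lia).
    assert (INR ell * (INR ell + 1) * INR s <= INR ell * (INR ell + 1) * r)
      by (apply Rmult_le_compat_l; nra).
    assert (INR ell * INR X <= INR ell * (2 * r))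
      by (apply Rmult_le_compat_l; nra).
    assert ((INR ell + 3) * r <= 4 * INR ell * r)
      by (apply Rmult_le_compat_r; nra).
    nra.
Qed.

Theorem lemma3 :
  exists C : R, 0 < C /\
    forall (t : nat) (es : list event),
      (forall e, In e es -> (ev_index e < t)%nat) ->
      (forall i, (i < t)%nat -> targetedb es i = true ->
                 (good_ins es i <= ellM t es)%nat) ->
      INR (good_cost_targeted es)
        <= C * (INR (ellM t es))^2
             * sqrt (INR (num_targeted t es) * INR (adv_cost es)).
Proof.
  exists 4. split; [lra|]. intros t es Hrange Hgood.
  apply cost_bound_real with (X := sqrt_adv_sum t es).
  - apply good_cost_targeted_le; assumption.
  - apply sqrt_adv_sum_sq, Hrange.
  - apply num_targeted_le_adv_cost, Hrange.
Qed.
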